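(* Let $\{\Phi^{(n)}\}_{n\ge1}$ be a sequence of finite crystallographic root systems of ranks $r_n$ and $\{d_n\}_{n\ge1}$ a sequence of positive integers such that $|\Phi^{(n),+}_{\le d_n}|\to\infty$ and for every $n$ there is a positive root of $\Phi^{(n)}$ of height $d_n$. Let $\delta_n$ be the maximal vertex degree of the graph with vertex set $\Phi^{(n),+}_{\le d_n}$ and an edge between distinct $\beta,\gamma$ whenever $\mathcal{X}_\beta$ and $\mathcal{X}_\gamma$ are dependent (equivalently, $\beta,\gamma$ are not orthogonal). Then there exist constants $C,C'>0$ and $N$ such that for all $n\ge N$, \[ |\Phi^{(n),+}_{\le d_n}|\le C\, r_n d_n \quad\text{and}\quad \delta_n\le C'\, d_n. \]
   Context: For a finite crystallographic root system $\Phi$ with simple roots $\Delta$ and positive roots $\Phi^+$, the rank is $|\Delta|$, the height of $\beta=\sum_{\alpha\in\Delta}\lambda_\alpha\alpha\in\Phi^+$ is $\sum_\alpha\lambda_\alpha$, and $\Phi^+_{\le d}$ is the set of positive roots of height at most $d$. $W$ is the Weyl group. For $\beta\in\Phi^+$, $\mathcal{X}_\beta$ is the Bernoulli random variable on $W$ (uniform) with $\mathcal{X}_\beta(w)=1$ if $w(\beta)\in-\Phi^+$ and $0$ otherwise. *)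

From mathcomp Require Import all_boot all_order all_algebra all_fingroup.
From mathcomp Require Import boolp reals.
Set Implicit Arguments. Unset Strict Implicit. Unset Printing Implicit Defensive.
Import Order.TTheory GRing.Theory Num.Theory.
Local Open Scope ring_scope.

Section RootSystems.
Variable R : realType.

Definition dotv (r : nat) (u v : 'rV[R]_r) : R := (u *m v^T) 0 0.

Definition reflv (r : nat) (a b : 'rV[R]_r) : 'rV[R]_r :=
  b - ((2 * dotv b a) / dotv a a) *: a.

Variables (m r : nat).
(* A finite root system is given by an injective enumeration of its roots *)
Variable phi : 'I_m -> 'rV[R]_r.

Definition is_root_system : Prop :=
  injective phi /\
  (forall i, phi i != 0) /\
  \rank (\matrix_(i < m) phi i) = r /\
  (forall i j, exists k, phi k = reflv (phi i) (phi j)) /\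
  (forall i j, exists z : int, (2 * dotv (phi j) (phi i)) / dotv (phi i) (phi i) = z%:~R) /\
  (forall i j (c : R), phi j = c *: phi i -> phi j = phi i \/ phi j = - phi i).

Variable D : {set 'I_m}.

Definition is_base : Prop :=
  (forall c : 'I_m -> R, \sum_(i in D) c i *: phi i = 0 -> forall i, i \in D -> c i = 0)
  /\ (forall j, exists c : 'I_m -> nat,
        phi j = \sum_(i in D) (c i)%:R *: phi i \/
        phi j = - \sum_(i in D) (c i)%:R *: phi i).

Definition pos_height (j : 'I_m) (h : nat) : Prop :=
  exists c : 'I_m -> nat,
    phi j = \sum_(i in D) (c i)%:R *: phi i /\ (\sum_(i in D) c i)%N = h.

Definition is_neg (j : 'I_m) : Prop :=
  exists c : 'I_m -> nat,
    phi j = - \sum_(i in D) (c i)%:R *: phi i /\ (0 < \sum_(i in D) c i)%N.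

Definition pos_le (d : nat) : {set 'I_m} :=
  [set j | `[< exists h, (h <= d)%N /\ pos_height j h >]].

(* Weyl group, realized faithfully as a group of permutations of the roots,
   generated by the reflections s_alpha *)
Definition refl_perms : {set {perm 'I_m}} :=
  [set s : {perm 'I_m} | [exists i, [forall j, phi (s j) == reflv (phi i) (phi j)]]].

Definition weyl : {set {perm 'I_m}} := <<refl_perms>>%g.

Definition X (b : 'I_m) (w : {perm 'I_m}) : bool := `[< is_neg (w b) >].

(* X_b and X_g are independent under the uniform distribution on W *)
Definition indepX (b g : 'I_m) : bool :=
  [forall x : bool, forall y : bool,
     #|weyl| * #|[set w in weyl | (X b w == x) && (X g w == y)]|
     == #|[set w in weyl | X b w == x]| * #|[set w in weyl | X g w == y]|]%N.

Definition dep_degree (d : nat) (b : 'I_m) : nat :=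
  #|[set g in pos_le d | (g != b) && ~~ indepX b g]|.

Definition max_dep_degree (d : nat) : nat :=
  (\max_(b in pos_le d) dep_degree d b)%N.

End RootSystems.

(* Both bounds are proved one height at a time.  Two distinct positive roots
   of the same height make a non-acute angle: otherwise their difference would
   be a root, of height 0.  As the height is a positive linear functional on
   them, such a family is linearly independent, so each height contributes at
   most rank-many roots, whence |Phi^+_{<=d}| <= r d.
   If beta and gamma are orthogonal, the reflection s_beta flips X_beta and
   fixes X_gamma, and s_gamma does the converse; translating W by them shows
   that the four joint events are equinumerous, so X_beta and X_gamma are
   independent.  The roots of a given height making an acute angle with beta
   are pairwise non-acute and, by integrality of the Cartan numbers, satisfy
   |beta|^2, |gamma|^2 <= 2 (beta, gamma); Cauchy-Schwarz leaves room for at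
   most four of them.  Doing the same for -beta gives delta <= 8 d. *)

From mathcomp Require Import all_boot all_order all_algebra all_fingroup.
From mathcomp Require Import boolp reals.
From mathcomp Require Import ring lra zify.
Set Implicit Arguments. Unset Strict Implicit. Unset Printing Implicit Defensive.
Import Order.TTheory GRing.Theory Num.Theory.
Local Open Scope ring_scope.

Section InnerProduct.
Variables (R : realType) (r : nat).
Implicit Types (u v w a b : 'rV[R]_r).

Lemma dotvE u v : dotv u v = \sum_i u 0 i * v 0 i.
Proof. by rewrite /dotv mxE; apply: eq_bigr => i _; rewrite mxE. Qed.

Lemma dotvC u v : dotv u v = dotv v u.
Proof. by rewrite !dotvE; apply: eq_bigr => i _; rewrite mulrC. Qed.

Lemma dotvDl u v w : dotv (u + v) w = dotv u w + dotv v w.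
Proof. by rewrite !dotvE -big_split; apply: eq_bigr => i _; rewrite mxE mulrDl. Qed.

Lemma dotvZl c u v : dotv (c *: u) v = c * dotv u v.
Proof. by rewrite !dotvE mulr_sumr; apply: eq_bigr => i _; rewrite mxE mulrA. Qed.

Lemma dotvNl u v : dotv (- u) v = - dotv u v.
Proof. by rewrite -scaleN1r dotvZl mulN1r. Qed.

Lemma dotvBl u v w : dotv (u - v) w = dotv u w - dotv v w.
Proof. by rewrite dotvDl dotvNl. Qed.

Lemma dotvZr c u v : dotv v (c *: u) = c * dotv v u.
Proof. by rewrite dotvC dotvZl dotvC. Qed.

Lemma dotvNr u v : dotv v (- u) = - dotv v u.
Proof. by rewrite dotvC dotvNl dotvC. Qed.

Lemma dotvBr u v w : dotv w (u - v) = dotv w u - dotv w v.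
Proof. by rewrite dotvC dotvBl !(dotvC w). Qed.

Lemma dotv0l v : dotv 0 v = 0.
Proof. by rewrite -(scale0r 0) dotvZl mul0r. Qed.

Lemma dotv_suml (I : finType) (P : pred I) (F : I -> 'rV[R]_r) v :
  dotv (\sum_(i | P i) F i) v = \sum_(i | P i) dotv (F i) v.
Proof. by elim/big_rec2: _ => [|i x y _ <-]; rewrite ?dotv0l ?dotvDl. Qed.

Lemma dotv_sumr (I : finType) (P : pred I) (F : I -> 'rV[R]_r) v :
  dotv v (\sum_(i | P i) F i) = \sum_(i | P i) dotv v (F i).
Proof. by rewrite dotvC dotv_suml; apply: eq_bigr => i _; rewrite dotvC. Qed.

Lemma dotvv_ge0 u : 0 <= dotv u u.
Proof. by rewrite dotvE sumr_ge0 // => i _; rewrite -expr2 sqr_ge0. Qed.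

Lemma dotvv_eq0 u : (dotv u u == 0) = (u == 0).
Proof.
apply/idP/eqP => [|->]; last by rewrite dotv0l.
rewrite dotvE psumr_eq0 => [/allP u0|i _]; last by rewrite -expr2 sqr_ge0.
apply/rowP => i; rewrite mxE; apply/eqP.
by have := u0 i (mem_index_enum _); rewrite mulf_eq0 orbb.
Qed.

Lemma dotvv_gt0 u : (0 < dotv u u) = (u != 0).
Proof. by rewrite lt_def dotvv_ge0 dotvv_eq0 andbT. Qed.

Lemma dotv_cauchy_schwarz u v : dotv u v ^+ 2 <= dotv u u * dotv v v.
Proof.
have [->|u0] := eqVneq u 0; first by rewrite !dotv0l expr0n mul0r.
have uu := dotvv_gt0 u; rewrite u0 in uu.
have := dotvv_ge0 (dotv u u *: v - dotv u v *: u).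
rewrite !dotvBl !dotvBr !dotvZl !dotvZr (dotvC v u); nra.
Qed.

(* The positive part is minus the negative part, and their inner product is
   [<= 0] term by term. *)
Lemma dotv_pos_part_eq0 (I : finType) (x : I -> 'rV[R]_r) (t : I -> R) :
  (forall i j, i != j -> dotv (x i) (x j) <= 0) ->
  \sum_i t i *: x i = 0 -> \sum_(i | 0 < t i) t i *: x i = 0.
Proof.
move=> obtuse; rewrite (bigID (fun i => 0 < t i)) /= => /eqP; rewrite addr_eq0.
set v := \sum_(i | _) _ => /eqP vE; apply/eqP; rewrite -dotvv_eq0 eq_le dotvv_ge0 andbT.
rewrite {2}vE dotvNr dotv_suml oppr_le0; apply: sumr_ge0 => i ti.
rewrite dotv_sumr; apply: sumr_ge0 => j tj; rewrite dotvZl dotvZr mulrA.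
apply: mulr_le0; first by apply: mulr_ge0_le0; [exact: ltW | rewrite leNgt].
by apply: obtuse; apply: contraNneq tj => <-.
Qed.

(* With [w = sum_i x i]: [|w|^2 <= sum_i |x i|^2 <= 2 (u, w)] and
   [#|G| |u|^2 <= 2 (u, w)], while Cauchy-Schwarz gives [(u, w) <= 2 |u|^2]. *)
Lemma card_obtuse_cone_le4 (I : finType) (G : {set I}) (x : I -> 'rV[R]_r) u :
  u != 0 ->
  (forall i, i \in G ->
     dotv u u <= 2 * dotv u (x i) /\ dotv (x i) (x i) <= 2 * dotv u (x i)) ->
  {in G &, forall i j, i != j -> dotv (x i) (x j) <= 0} ->
  (#|G| <= 4)%N.
Proof.
move=> u0 near obtuse; have uu : 0 < dotv u u by rewrite dotvv_gt0.
set w := \sum_(i in G) x i; set P := dotv u w.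
have ww : dotv w w <= 2 * P.
  apply: (@le_trans _ _ (\sum_(i in G) dotv (x i) (x i))).
    rewrite dotv_suml; apply: ler_sum => i iG; rewrite /w dotv_sumr (bigD1 i) //= gerDl.
    by apply: sumr_le0 => j /andP[jG ji]; apply: obtuse; rewrite // eq_sym.
  by rewrite /P /w dotv_sumr mulr_sumr; apply: ler_sum => i iG; apply: (near i iG).2.
have kuu : #|G|%:R * dotv u u <= 2 * P.
  rewrite mulr_natl -sumr_const /P /w dotv_sumr mulr_sumr.
  by apply: ler_sum => i iG; apply: (near i iG).1.
have [-> //|G0] := posnP #|G|.
have k1 : 1 <= #|G|%:R :> R by rewrite ler1n.
have P0 : 0 < P by nra.
have P2 : P ^+ 2 <= dotv u u * (2 * P).
  by apply: le_trans (dotv_cauchy_schwarz u w) _; rewrite ler_wpM2l // ltW.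
have : P <= 2 * dotv u u by nra.
by rewrite -(ler_nat R) => Pu; nra.
Qed.

Lemma reflvK a : a != 0 -> involutive (reflv a).
Proof.
rewrite -dotvv_gt0 => aa b; rewrite /reflv dotvBl dotvZl.
set c := 2 * dotv b a / dotv a a.
have -> : 2 * (dotv b a - c * dotv a a) / dotv a a = - c.
  by rewrite /c; field; rewrite gt_eqF.
by rewrite scaleNr opprK subrK.
Qed.

Lemma reflvN a b : reflv a (- b) = - reflv a b.
Proof. by rewrite /reflv dotvNl mulrN mulNr scaleNr opprK opprB addrC. Qed.

Lemma reflvv a : a != 0 -> reflv a a = - a.
Proof.
by rewrite -dotvv_gt0 => aa; rewrite /reflv mulfK ?gt_eqF // scaler_nat mulr2n opprD addNKr.
Qed.

Lemma reflv_dot0 a b : dotv b a = 0 -> reflv a b = b.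
Proof. by move=> ba; rewrite /reflv ba mulr0 mul0r scale0r subr0. Qed.

End InnerProduct.

Lemma card_le_cover (T : finType) (S : {set T}) (A : nat -> {set T}) (n c : nat) :
  (forall x, x \in S -> exists2 h, (h < n)%N & x \in A h) ->
  (forall h, (h < n)%N -> (#|A h| <= c)%N) ->
  (#|S| <= n * c)%N.
Proof.
elim: n S => [|n IH] S cover cardA.
  rewrite mul0n leqn0 cards_eq0; apply/eqP/setP => x; rewrite inE.
  by apply/negP => /cover[].
rewrite mulSn -(cardsID (A n) S) leq_add //.
  exact: leq_trans (subset_leq_card (subsetIr _ _)) (cardA n _).
apply: IH => [x|h hn]; last exact/cardA/ltnW.
rewrite inE => /andP[xAn /cover[h]]; rewrite ltnS leq_eqVlt => /orP[/eqP->|hn xAh].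
  by rewrite (negPf xAn).
by exists h.
Qed.

Section IndependenceByTranslation.
Variables (gT : finGroupType) (W : {group gT}).

Lemma card_translate (s : gT) (Q : pred gT) : s \in W ->
  #|[set w in W | Q (s * w)%g]| = #|[set w in W | Q w]|.
Proof.
move=> Ws; rewrite -!sum1_card [RHS](reindex_inj (mulgI s)).
by apply: eq_bigl => w; rewrite !inE groupMl.
Qed.

(* Left translations by [sA] and [sB] permute the four atoms
   [A = x, B = y] transitively, so they are equinumerous. *)
Lemma indep_of_translations (A B : gT -> bool) (sA sB : gT) :
  sA \in W -> sB \in W ->
  {in W, forall w, A (sA * w)%g = ~~ A w /\ B (sA * w)%g = B w} ->
  {in W, forall w, A (sB * w)%g = A w /\ B (sB * w)%g = ~~ B w} ->
  forall x y, (#|W| * #|[set w in W | (A w == x) && (B w == y)]|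
    = #|[set w in W | A w == x]| * #|[set w in W | B w == y]|)%N.
Proof.
move=> WsA WsB flipA flipB.
pose N x y := #|[set w in W | (A w == x) && (B w == y)]|.
have NA y : N false y = N true y.
  rewrite /N -(card_translate _ WsA); apply: eq_card => w; rewrite !inE.
  by case: (boolP (w \in W)) => //= /flipA[-> ->]; case: (A w).
have NB x : N x false = N x true.
  rewrite /N -(card_translate _ WsB); apply: eq_card => w; rewrite !inE.
  by case: (boolP (w \in W)) => //= /flipB[-> ->]; case: (B w).
have [q Nq] : exists q, forall x y, N x y = q.
  by exists (N true true); case; case; rewrite ?NA ?NB.
have margA x : #|[set w in W | A w == x]| = (q + q)%N.
  rewrite -{1}(Nq x true) -(Nq x false) -(cardsID [set w | B w]).
  congr (_ + _)%N; apply: eq_card => w;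
  by rewrite !inE; case: (w \in W); case: (A w == x); case: (B w).
have margB y : #|[set w in W | B w == y]| = (q + q)%N.
  rewrite -{1}(Nq true y) -(Nq false y) -(cardsID [set w | A w]).
  congr (_ + _)%N; apply: eq_card => w;
  by rewrite !inE; case: (w \in W); case: (B w == y); case: (A w).
have cardW : #|W| = (q + q + (q + q))%N.
  rewrite -{1}(margA true) -(margA false) -(cardsID [set w | A w]).
  congr (_ + _)%N; apply: eq_card => w;
  by rewrite !inE; case: (w \in W); case: (A w).
by move=> x y; rewrite cardW margA margB -/(N x y) Nq; lia.
Qed.

End IndependenceByTranslation.

Lemma intr_gt0_cases (R : realType) (z : int) :
  0 < z%:~R :> R -> z%:~R = 1 :> R \/ 2 <= z%:~R :> R.
Proof.
rewrite ltr0z => z0; have [->|z1] := eqVneq z 1; [by left | right].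
by rewrite -[2]/(2%:~R : R) ler_int; lia.
Qed.

Section RootSystem.
Variables (R : realType) (m r : nat) (phi : 'I_m -> 'rV[R]_r) (D : {set 'I_m}).
Hypotheses (rootsys : is_root_system phi) (base : is_base phi D).

Local Notation comb c := (\sum_(i in D) c i *: phi i).
Local Notation cartan i j := (2 * dotv (phi j) (phi i) / dotv (phi i) (phi i)).

Lemma root_inj : injective phi. Proof. by case: rootsys. Qed.

Lemma root_neq0 i : phi i != 0. Proof. by case: rootsys => _ []. Qed.

Lemma root_reflect i j : exists k, phi k = reflv (phi i) (phi j).
Proof. by case: rootsys => _ [_ [_ []]]. Qed.

Lemma cartan_int i j : exists z : int, cartan i j = z%:~R.
Proof. by case: rootsys => _ [_ [_ [_ []]]]. Qed.

Lemma root_opp i : exists k, phi k = - phi i.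
Proof. by have [k kE] := root_reflect i i; exists k; rewrite kE reflvv ?root_neq0. Qed.

Lemma base_coef_inj (a b : 'I_m -> R) : comb a = comb b -> {in D, a =1 b}.
Proof.
case: base => free _ ab i iD; apply/eqP; rewrite -subr_eq0; apply/eqP.
apply: (free (fun l => a l - b l) _ i iD).
by under eq_bigr do rewrite scalerBl; rewrite sumrB ab subrr.
Qed.

Lemma base_expansion j :
  exists2 c : 'I_m -> nat, (0 < \sum_(i in D) c i)%N &
    phi j = comb (fun i => (c i)%:R) \/ phi j = - comb (fun i => (c i)%:R).
Proof.
case: base => _ /(_ j) [c jc]; exists c => //; rewrite lt0n.
apply: contra (root_neq0 j); rewrite sum_nat_eq0 => /forall_inP c0.
have comb0 : comb (fun i => (c i)%:R) = 0.
  by apply: big1 => i /c0 /eqP ->; rewrite scale0r.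
by case: jc => ->; rewrite comb0 ?oppr0.
Qed.

Lemma root_coef_sum_neq0 k (a : 'I_m -> R) : phi k = comb a -> \sum_(i in D) a i != 0.
Proof.
move=> ka; have [c c0 [] kc] := base_expansion k.
  by rewrite (eq_bigr _ (base_coef_inj (etrans (esym ka) kc))) -natr_sum pnatr_eq0 -lt0n.
have ca : comb a = comb (fun i => - (c i)%:R).
  by rewrite -ka kc -sumrN; apply: eq_bigr => i _; rewrite scaleNr.
by rewrite (eq_bigr _ (base_coef_inj ca)) sumrN oppr_eq0 -natr_sum pnatr_eq0 -lt0n.
Qed.

Lemma pos_height_gt0 j h : pos_height phi D j h -> (0 < h)%N.
Proof.
case=> c [jc <-]; rewrite lt0n -(eqr_nat R) natr_sum.
exact: (root_coef_sum_neq0 jc).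
Qed.

Lemma sub_roots_same_height i j k h :
  pos_height phi D i h -> pos_height phi D j h -> phi k != phi i - phi j.
Proof.
case=> ci [ic ih] [cj [jc jh]]; apply/eqP => kE.
have /root_coef_sum_neq0 : phi k = comb (fun l => (ci l)%:R - (cj l)%:R).
  by rewrite kE ic jc -sumrB; apply: eq_bigr => l _; rewrite scalerBl.
by rewrite sumrB -!natr_sum ih jh subrr eqxx.
Qed.

Lemma sub_root_of_dotv_gt0 i j : i != j -> 0 < dotv (phi i) (phi j) ->
  exists k, phi k = phi i - phi j \/ phi k = phi j - phi i.
Proof.
move=> ij ij0; have ii0 : 0 < dotv (phi i) (phi i) by rewrite dotvv_gt0 root_neq0.
have jj0 : 0 < dotv (phi j) (phi j) by rewrite dotvv_gt0 root_neq0.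
have [zi Ei] := cartan_int j i; have [zj Ej] := cartan_int i j.
rewrite (dotvC (phi j)) in Ej.
have := @intr_gt0_cases R zi; rewrite -Ei divr_gt0 ?mulr_gt0 // => /(_ isT) [ni|ni].
  have [k kE] := root_reflect j i; exists k; left.
  by rewrite kE /reflv ni scale1r.
have := @intr_gt0_cases R zj; rewrite -Ej divr_gt0 ?mulr_gt0 // => /(_ isT) [nj|nj].
  have [k kE] := root_reflect i j; exists k; right.
  by rewrite kE /reflv (dotvC (phi j)) nj scale1r.
(* both Cartan integers are [>= 2], forcing [|phi i - phi j| = 0] *)
case/eqP: ij; apply: root_inj; apply/eqP; rewrite -subr_eq0 -dotvv_eq0.
rewrite ler_pdivlMr // in ni; rewrite ler_pdivlMr // in nj.
rewrite eq_le dotvv_ge0 andbT dotvBl !dotvBr (dotvC (phi j)); lra.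
Qed.

Lemma dotv_same_height_le0 i j h : i != j ->
  pos_height phi D i h -> pos_height phi D j h -> dotv (phi i) (phi j) <= 0.
Proof.
move=> ij ih jh; rewrite leNgt; apply/negP => /(sub_root_of_dotv_gt0 ij) [k [] /eqP kE].
  exact: negP (sub_roots_same_height k ih jh) kE.
exact: negP (sub_roots_same_height k jh ih) kE.
Qed.

Lemma sum_scale_comb (I : finType) (P : pred I) (t : I -> R) (c : I -> 'I_m -> R) :
  \sum_(a | P a) t a *: comb (c a) = comb (fun i => \sum_(a | P a) t a * c a i).
Proof.
under eq_bigr do rewrite scaler_sumr; rewrite exchange_big /=.
by apply: eq_bigr => i _; rewrite scaler_suml; apply: eq_bigr => a _; rewrite scalerA.
Qed.

(* The height is a linear functional on the span of the base. *)
Lemma comb_height (I : finType) (P : pred I) (t : I -> R) (f : I -> 'I_m -> nat) h :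
  (forall a, (\sum_(i in D) f a i)%N = h) ->
  \sum_(a | P a) t a *: comb (fun i => (f a i)%:R) = 0 ->
  (\sum_(a | P a) t a) * h%:R = 0.
Proof.
case: base => free _ fh; rewrite sum_scale_comb => /free coef0.
transitivity (\sum_(i in D) \sum_(a | P a) t a * (f a i)%:R); last exact: big1.
rewrite mulr_suml exchange_big; apply: eq_bigr => a _.
by rewrite -mulr_sumr -natr_sum fh.
Qed.

Lemma same_height_free (I : finType) (x : I -> 'I_m) h :
  injective x -> (forall a, pos_height phi D (x a) h) ->
  forall t : I -> R, \sum_a t a *: phi (x a) = 0 -> forall a, t a = 0.
Proof.
move=> xinj xh; have [f fE] := choice xh.
have obtuse a b : a != b -> dotv (phi (x a)) (phi (x b)) <= 0.
  by move=> ab; apply: dotv_same_height_le0; rewrite ?inj_eq.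
have le0 t : \sum_a t a *: phi (x a) = 0 -> forall a, t a <= 0.
  move=> /(dotv_pos_part_eq0 obtuse) pos a; rewrite leNgt; apply/negP => ta.
  have h0 : h%:R != 0 :> R by rewrite pnatr_eq0 -lt0n (pos_height_gt0 (xh a)).
  move: pos; under eq_bigr do rewrite (fE _).1.
  move=> /(comb_height (fun b => (fE b).2)) /eqP; rewrite mulf_eq0 (negPf h0) orbF.
  move=> /eqP /(psumr_eq0P (fun b => @ltW _ _ _ _)) /(_ a ta) /eqP.
  by rewrite gt_eqF.
move=> t t0 a; apply/eqP; rewrite eq_le le0 //= -oppr_le0.
by apply: (le0 (fun b => - t b)); under eq_bigr do rewrite scaleNr; rewrite sumrN t0 oppr0.
Qed.

Definition roots_of_height h := [set j | `[< pos_height phi D j h >]].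

Lemma card_roots_of_height h : (#|roots_of_height h| <= #|D|)%N.
Proof.
set H := roots_of_height h.
have xh (a : 'I_#|H|) : pos_height phi D (enum_val a) h.
  by have := enum_valP a; rewrite inE => /asboolP.
have [f fE] := choice xh.
pose M := \matrix_(a < #|H|, b < #|D|) (f a (enum_val b))%:R : 'M[R]_(#|H|, #|D|).
suff /eqP <- : row_free M by apply: rank_leq_col.
apply/inj_row_free => v vM0; apply/rowP => a; rewrite mxE.
apply: (same_height_free enum_val_inj xh); under eq_bigr do rewrite (fE _).1.
rewrite sum_scale_comb; apply: big1 => i iD.
suff -> : \sum_a v 0 a * (f a i)%:R = 0 by rewrite scale0r.
move/rowP/(_ (enum_rank_in iD i)): vM0; rewrite !mxE => vM0; rewrite -[RHS]vM0.
by apply: eq_bigr => b _; rewrite mxE enum_rankK_in.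
Qed.

Lemma pos_le_height d j : j \in pos_le phi D d ->
  exists2 h, (h < d)%N & pos_height phi D j h.+1.
Proof.
rewrite inE => /asboolP [[|h] [hd jh]]; first by have := pos_height_gt0 jh.
by exists h.
Qed.

Lemma card_pos_le d : (#|pos_le phi D d| <= #|D| * d)%N.
Proof.
rewrite mulnC; apply: (@card_le_cover _ _ (fun h => roots_of_height h.+1)).
  by move=> j /pos_le_height[h hd jh]; exists h; rewrite // inE; apply/asboolP.
by move=> h _; apply: card_roots_of_height.
Qed.

Lemma root_norm_le_dotv i j :
  dotv (phi i) (phi j) != 0 -> dotv (phi i) (phi i) <= 2 * `|dotv (phi i) (phi j)|.
Proof.
move=> ij0; have ii0 : 0 < dotv (phi i) (phi i) by rewrite dotvv_gt0 root_neq0.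
have [z E] := cartan_int i j; rewrite (dotvC (phi j)) in E.
have : 1 <= `|z%:~R : R|.
  apply: norm_intr_ge1; first exact: intr_int.
  by rewrite -E !mulf_eq0 invr_eq0 (gt_eqF ii0) (negPf ij0) pnatr_eq0.
by rewrite -E normrM normfV (gtr0_norm ii0) ler_pdivlMr // mul1r normrM normr_nat.
Qed.

Lemma card_roots_of_height_dotv_gt0 b h :
  (#|[set g in roots_of_height h | 0 < dotv (phi b) (phi g)]%R| <= 4)%N.
Proof.
apply: (card_obtuse_cone_le4 (x := phi) (root_neq0 b)) => [g | g g'].
  rewrite inE => /andP[_ bg]; have bg0 : dotv (phi b) (phi g) != 0 by rewrite gt_eqF.
  rewrite -(gtr0_norm bg) {2}dotvC; split; apply: root_norm_le_dotv => //.
  by rewrite dotvC.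
rewrite !inE => /andP[/asboolP gh _] /andP[/asboolP g'h _] gg'.
exact: dotv_same_height_le0 gh g'h.
Qed.

Lemma weyl_reflection i :
  exists2 s, s \in weyl phi & forall j, phi (s j) = reflv (phi i) (phi j).
Proof.
have [f fE] := choice (root_reflect i).
have f_inj : injective f.
  move=> j1 j2 /(congr1 phi); rewrite !fE.
  by move=> /(inv_inj (reflvK (root_neq0 i))) /root_inj.
exists (perm f_inj) => [|j]; last by rewrite permE.
apply: mem_gen; rewrite inE; apply/existsP; exists i.
by apply/forallP => j; rewrite permE fE.
Qed.

Lemma weyl_opp w : w \in weyl phi ->
  forall j k, phi k = - phi j -> phi (w k) = - phi (w j).
Proof.
case/gen_prodgP => n [c c_refl ->].
apply: (big_ind (fun w : {perm 'I_m} =>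
  forall j k, phi k = - phi j -> phi (w k) = - phi (w j))).
- by move=> j k; rewrite !perm1.
- by move=> s t sP tP j k kj; rewrite !permM (tP _ _ (sP _ _ kj)).
- move=> i _ j k kj; have := c_refl i; rewrite inE => /existsP[l /forallP reflE].
  by rewrite !(eqP (reflE _)) kj reflvN.
Qed.

Lemma is_neg_opp j k : phi k = - phi j -> is_neg phi D k <-> ~ is_neg phi D j.
Proof.
move=> kj; split.
  case=> ck [kc ck0] [cj [jc cj0]].
  have : comb (fun i => (cj i)%:R) = comb (fun i => - (ck i)%:R).
    by rewrite -[LHS]opprK -jc -kj kc -sumrN; apply: eq_bigr => i _; rewrite scaleNr.
  move=> /base_coef_inj coefE.
  suff : \sum_(i in D) (cj i)%:R = \sum_(i in D) - (ck i)%:R :> R by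
    rewrite sumrN -!natr_sum => /eqP;
    rewrite -subr_eq0 opprK -natrD pnatr_eq0 addn_eq0 -leqn0 leqNgt cj0.
  exact: eq_bigr.
move=> jpos; have [c c0 [] jc]:= base_expansion j; last by case: jpos; exists c.
by exists c; rewrite kj jc.
Qed.

Lemma X_mul_opp (s w : {perm 'I_m}) b : w \in weyl phi -> phi (s b) = - phi b ->
  X phi D b (s * w)%g = ~~ X phi D b w.
Proof.
move=> Ww sb; rewrite /X permM -asbool_neg; apply: asbool_equiv_eq.
exact/is_neg_opp/(weyl_opp Ww).
Qed.

Lemma X_mul_fix (s w : {perm 'I_m}) b : s b = b -> X phi D b (s * w)%g = X phi D b w.
Proof. by move=> sb; rewrite /X permM sb. Qed.

Lemma orthogonal_indepX b g : dotv (phi b) (phi g) = 0 -> indepX phi D b g.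
Proof.
move=> bg; have [sb Wsb sbE] := weyl_reflection b; have [sg Wsg sgE] := weyl_reflection g.
have sb_fix : sb g = g by apply: root_inj; rewrite sbE reflv_dot0 // dotvC.
have sg_fix : sg b = b by apply: root_inj; rewrite sgE reflv_dot0.
apply/forallP => x; apply/forallP => y; apply/eqP.
apply: indep_of_translations Wsb Wsg _ _ x y => w Ww; split.
- by apply: X_mul_opp; rewrite // sbE reflvv ?root_neq0.
- exact: X_mul_fix.
- exact: X_mul_fix.
- by apply: X_mul_opp; rewrite // sgE reflvv ?root_neq0.
Qed.

Lemma dep_degree_le d b : (dep_degree phi D d b <= 8 * d)%N.
Proof.
have [b' b'E] := root_opp b.
pose G c h := [set g in roots_of_height h | 0 < dotv (phi c) (phi g)].
rewrite mulnC; apply: (@card_le_cover _ _ (fun h => G b h.+1 :|: G b' h.+1)).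
  move=> g; rewrite inE => /andP[/pos_le_height[h hd gh] /andP[_ dep]].
  have : dotv (phi b) (phi g) != 0 by apply: contra dep => /eqP /orthogonal_indepX.
  by exists h; rewrite // !inE asboolT // b'E dotvNl oppr_gt0 /= orbC -neq_lt.
move=> h _; apply: leq_trans (leq_card_setU _ _).1 _.
by rewrite (leq_add (card_roots_of_height_dotv_gt0 b _)) ?card_roots_of_height_dotv_gt0.
Qed.

Lemma max_dep_degree_le d : (max_dep_degree phi D d <= 8 * d)%N.
Proof. by apply/bigmax_leqP => b _; apply: dep_degree_le. Qed.

End RootSystem.

Theorem proposition4p7 (R : realType) (m r : nat -> nat)
    (phi : forall n, 'I_(m n) -> 'rV[R]_(r n)) (D : forall n, {set 'I_(m n)})
    (d : nat -> nat) :
  (forall n, is_root_system (phi n)) ->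
  (forall n, is_base (phi n) (D n)) ->
  (forall n, (0 < d n)%N) ->
  (forall K : nat, exists N : nat, forall n, (N <= n)%N ->
       (K <= #|pos_le (phi n) (D n) (d n)|)%N) ->
  (forall n, exists j, pos_height (phi n) (D n) j (d n)) ->
  exists (C C' : R), 0 < C /\ 0 < C' /\
    exists N : nat, forall n, (N <= n)%N ->
      (#|pos_le (phi n) (D n) (d n)|%:R <= C * #|D n|%:R * (d n)%:R) /\
      ((max_dep_degree (phi n) (D n) (d n))%:R <= C' * (d n)%:R).
Proof.
(* The bounds hold for every [n] with [C = 1] and [C' = 8]. *)
move=> rootsys base _ _ _; exists 1, 8; do 2!split => //.
exists 0%N => n _; split.
  by rewrite mul1r -natrM ler_nat card_pos_le.
by rewrite -[8]/(8%:R : R) -natrM ler_nat max_dep_degree_le.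
Qed.
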